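(* Let $\phi,\tilde\phi:\mathbb{R}\to(0,1)$ be differentiable, strictly increasing, surjective functions whose derivatives are each monotone on $(z_0,\infty)$ for some $z_0\ge 0$. Suppose $\phi$ has a higher order of saturation than $\tilde\phi$, i.e. (i) $\lim_{z\to\infty}\frac{1-\phi(z)}{1-\tilde\phi(az)}=0$ for every $a>0$, and (ii) the function $z\mapsto\tilde\phi^{-1}(\phi(z))$ is convex on $(z_1,\infty)$ for some $z_1\in\mathbb R$. Define $g_\phi(f):=\phi'(\phi^{-1}(f))$ and $g_{\tilde\phi}(f):=\tilde\phi'(\tilde\phi^{-1}(f))$ for $f\in(0,1)$. Then $g_\phi(f)/g_{\tilde\phi}(f)\to\infty$ as $f\to 1^-$.
   Context: $\phi^{-1},\tilde\phi^{-1}:(0,1)\to\mathbb R$ denote the inverse functions. The quantity $g_\phi(f)$ is the derivative of the gate function expressed as a function of its output value $f$; under gradient flow on a parameter $z$ with loss $L$, the output $f=\phi(z)$ evolves by $df/d\tau=-g_\phi(f)^2\,\partial L/\partial f$. *)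

From Stdlib Require Import Reals.
From Coquelicot Require Import Coquelicot.
Open Scope R_scope.

Definition monotone_on_ray (f : R -> R) (a : R) : Prop :=
  (forall x y, a < x -> x <= y -> f x <= f y) \/
  (forall x y, a < x -> x <= y -> f y <= f x).

Definition convex_on_ray (h : R -> R) (a : R) : Prop :=
  forall x y t, a < x -> a < y -> 0 <= t <= 1 ->
    h (t * x + (1 - t) * y) <= t * h x + (1 - t) * h y.

Definition is_inv_on01 (phi phiinv : R -> R) : Prop :=
  forall f, 0 < f < 1 -> phi (phiinv f) = f.

Definition gate_g (phi phiinv : R -> R) (f : R) : R := Derive phi (phiinv f).

(* Let h := phit^-1 o phi, so that phit (h z) = phi z.  Saturation (i) forces
   h to be superlinear, so for any base point c on the convex part of h the
   chord slope s(z) = (h z - h c)/(z - c) is nondecreasing and unbounded.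
   A bounded increasing function whose derivative is eventually monotone has
   an eventually nonincreasing, positive derivative; hence for c < x < z the
   mean value theorem and convexity give
     phi z - phi x = phit (h z) - phit (h x) >= phit' (h z) s(z) (z - x),
   so phi' z >= phit' (h z) s(z).  With f = phi z, the ratio
   g_phi(f) / g_phit(f) = phi' z / phit' (h z) is at least s(z), and
   z = phi^-1 f tends to infinity as f tends to 1. *)
From Stdlib Require Import Reals Lra.
From Coquelicot Require Import Coquelicot.
Open Scope R_scope.

Definition strictly_increasing (f : R -> R) : Prop :=
  forall x y, x < y -> f x < f y.

Definition nonincreasing_on_ray (f : R -> R) (a : R) : Prop :=
  forall x y, a < x -> x <= y -> f y <= f x.

Lemma strictly_increasing_reflect_lt (f : R -> R) (x y : R) :
  strictly_increasing f -> f x < f y -> x < y.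
Proof.
  intros Hf Hfxy. apply Rnot_le_lt; intro Hyx.
  destruct (Rle_lt_or_eq_dec y x Hyx) as [Hlt | ->]; [apply Hf in Hlt |]; lra.
Qed.

Lemma strictly_increasing_of_comp (g h f : R -> R) :
  strictly_increasing g -> strictly_increasing f ->
  (forall x, g (h x) = f x) -> strictly_increasing h.
Proof.
  intros Hg Hf Hcomp x y Hxy.
  apply (strictly_increasing_reflect_lt g); [exact Hg |].
  rewrite !Hcomp; auto.
Qed.

Lemma mean_value_Derive (f : R -> R) (a b : R) :
  (forall x, ex_derive f x) -> a < b ->
  exists c, a <= c <= b /\ f b - f a = Derive f c * (b - a).
Proof.
  intros Hd Hab.
  destruct (MVT_gen f a b (Derive f)) as [c [Hc Hmv]].
  - intros x _; apply Derive_correct, Hd.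
  - intros x _; apply continuity_pt_filterlim, (ex_derive_continuous (V := R_NormedModule)), Hd.
  - rewrite Rmin_left, Rmax_right in Hc by lra. eauto.
Qed.

Section Bounded_increasing.

Variables (g : R -> R) (a : R).
Hypothesis g_der : forall x, ex_derive g x.
Hypothesis g_inc : strictly_increasing g.

Lemma Derive_nonincreasing_of_bounded (lo hi : R) :
  (forall x, lo <= g x <= hi) -> monotone_on_ray (Derive g) a ->
  nonincreasing_on_ray (Derive g) a.
Proof.
  intros Hbnd [Hnd | Hni]; [exfalso | exact Hni].
  destruct (mean_value_Derive g (a + 1) (a + 2)) as [c [Hc Hmv]]; auto; try lra.
  assert (Hgrow := g_inc (a + 1) (a + 2) ltac:(lra)).
  set (d := Derive g c) in *.
  assert (Hd : 0 < d) by nra.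
  (* a nondecreasing derivative >= d makes g rise by more than hi - lo *)
  set (L := hi - lo + 1).
  assert (HL : 0 < L / d) by (apply Rdiv_lt_0_compat; pose proof (Hbnd 0); unfold L; lra).
  destruct (mean_value_Derive g c (c + L / d)) as [e [He Hmve]]; auto; try lra.
  assert (Hde : d <= Derive g e) by (apply Hnd; lra).
  assert (Hrise : d * (L / d) <= Derive g e * (L / d)) by (apply Rmult_le_compat_r; lra).
  replace (d * (L / d)) with L in Hrise by (field; lra).
  replace (c + L / d - c) with (L / d) in Hmve by ring.
  pose proof (Hbnd c). pose proof (Hbnd (c + L / d)). unfold L in *. lra.
Qed.

Hypothesis g'_noninc : nonincreasing_on_ray (Derive g) a.

Lemma Derive_pos_on_ray (x : R) : a < x -> 0 < Derive g x.
Proof.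
  intros Hx. apply Rnot_le_lt; intro Hle.
  destruct (mean_value_Derive g x (x + 1)) as [c [Hc Hmv]]; auto; try lra.
  assert (Derive g c <= Derive g x) by (apply g'_noninc; lra).
  assert (Hgrow := g_inc x (x + 1) ltac:(lra)). nra.
Qed.

Lemma increment_ge_Derive_right (y w : R) :
  a < y -> y < w -> Derive g w * (w - y) <= g w - g y.
Proof.
  intros Hy Hyw.
  destruct (mean_value_Derive g y w) as [xi [Hxi Hmv]]; auto.
  rewrite Hmv. apply Rmult_le_compat_r; [lra |]. apply g'_noninc; lra.
Qed.

End Bounded_increasing.

Lemma Derive_ge_of_left_increments (f : R -> R) (c z m : R) :
  ex_derive f z -> c < z ->
  (forall x, c < x < z -> m * (z - x) <= f z - f x) -> m <= Derive f z.
Proof.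
  intros Hd Hcz Hinc.
  apply Rle_plus_epsilon; intros eps Heps.
  destruct (proj1 (is_derive_Reals _ _ _) (Derive_correct f z Hd) eps Heps)
    as [delta Hdelta].
  set (t := Rmin (delta / 2) ((z - c) / 2)).
  assert (Ht : 0 < t < delta /\ t < z - c).
  { unfold t. pose proof (cond_pos delta).
    pose proof (Rmin_l (delta / 2) ((z - c) / 2)).
    pose proof (Rmin_r (delta / 2) ((z - c) / 2)).
    assert (0 < Rmin (delta / 2) ((z - c) / 2)) by (apply Rmin_glb_lt; lra).
    lra. }
  assert (Hquot := Hdelta (- t) ltac:(lra)
                     ltac:(rewrite Rabs_Ropp, Rabs_pos_eq; lra)).
  apply Rabs_def2 in Hquot.
  set (q := (f (z + - t) - f z) / - t) in Hquot.
  assert (Hq : q * t = f z - f (z - t)) by (unfold q, Rminus; field; lra).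
  assert (Hmq : m * t <= q * t).
  { rewrite Hq. replace t with (z - (z - t)) at 1 by ring. apply Hinc; lra. }
  apply Rmult_le_reg_r in Hmq; lra.
Qed.

Definition slope (h : R -> R) (c z : R) : R := (h z - h c) / (z - c).

Section Convex_slope.

Variables (h : R -> R) (a c : R).
Hypothesis h_convex : convex_on_ray h a.
Hypothesis a_lt_c : a < c.

Lemma convex_below_chord (x z : R) :
  c < x < z -> h x <= h c + slope h c z * (x - c).
Proof.
  intros Hx.
  set (t := (z - x) / (z - c)).
  assert (Ht : 0 <= t <= 1).
  { unfold t; split.
    - apply Rdiv_le_0_compat; lra.
    - apply (Rdiv_le_1 (z - x) (z - c)); lra. }
  pose proof (h_convex c z t ltac:(lra) ltac:(lra) Ht) as Hcv.
  replace (t * c + (1 - t) * z) with x in Hcv by (unfold t; field; lra).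
  replace (h c + slope h c z * (x - c)) with (t * h c + (1 - t) * h z)
    by (unfold t, slope; field; lra).
  exact Hcv.
Qed.

Lemma slope_nondecreasing (x z : R) :
  c < x < z -> slope h c x <= slope h c z.
Proof.
  intros Hx. pose proof (convex_below_chord x z Hx).
  unfold slope at 1. apply Rle_div_l; lra.
Qed.

Lemma slope_mul_le_increment (x z : R) :
  c < x < z -> slope h c z * (z - x) <= h z - h x.
Proof.
  intros Hx. pose proof (convex_below_chord x z Hx).
  assert (h z - h c = slope h c z * (z - c)) by (unfold slope; field; lra).
  nra.
Qed.

Hypothesis h_superlinear :
  forall k, 0 < k -> exists N, forall z, N < z -> k * z < h z.

Lemma slope_unbounded (M : R) : 0 < M -> exists z, c < z /\ M <= slope h c z.
Proof.
  intros HM.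
  destruct (h_superlinear (M + 1) ltac:(lra)) as [N HN].
  set (z := Rmax (Rmax N c) (Rabs (h c - M * c)) + 1).
  assert (Hz : N < z /\ c < z /\ h c - M * c < z).
  { pose proof (Rmax_l (Rmax N c) (Rabs (h c - M * c))).
    pose proof (Rmax_r (Rmax N c) (Rabs (h c - M * c))).
    pose proof (Rmax_l N c). pose proof (Rmax_r N c).
    pose proof (Rle_abs (h c - M * c)). unfold z; lra. }
  exists z; split; [lra |].
  pose proof (HN z ltac:(lra)).
  unfold slope. apply Rle_div_r; lra.
Qed.

Lemma slope_tends_to_infinity :
  filterlim (slope h c) (Rbar_locally p_infty) (Rbar_locally p_infty).
Proof.
  intros P [K HK].
  destruct (slope_unbounded (Rmax K 0 + 1)) as [z [Hcz Hsz]].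
  { pose proof (Rmax_r K 0); lra. }
  exists z; intros y Hzy. apply HK.
  pose proof (slope_nondecreasing z y ltac:(lra)).
  pose proof (Rmax_l K 0). lra.
Qed.

End Convex_slope.

Lemma saturation_eventually_lt (phi phit : R -> R) (k : R) :
  (forall z, phit z < 1) ->
  is_lim (fun z => (1 - phi z) / (1 - phit (k * z))) p_infty 0 ->
  exists N, forall z, N < z -> phit (k * z) < phi z.
Proof.
  intros Hphit_lt1 Hlim.
  destruct (proj2 (is_lim_spec _ _ _) Hlim (mkposreal 1 Rlt_0_1)) as [N HN].
  exists N; intros z Hz.
  specialize (HN z Hz); simpl in HN.
  apply Rabs_def2 in HN as [HN _].
  pose proof (Hphit_lt1 (k * z)).
  rewrite Rminus_0_r in HN.
  apply (Rlt_div_l (1 - phi z) 1 (1 - phit (k * z))) in HN; lra.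
Qed.

Lemma superlinear_of_saturation (phi phit h : R -> R) :
  (forall z, phit z < 1) -> strictly_increasing phit ->
  (forall z, phit (h z) = phi z) ->
  (forall k, 0 < k -> is_lim (fun z => (1 - phi z) / (1 - phit (k * z))) p_infty 0) ->
  forall k, 0 < k -> exists N, forall z, N < z -> k * z < h z.
Proof.
  intros Hphit_lt1 Hphit_inc Hcomp Hsat k Hk.
  destruct (saturation_eventually_lt phi phit k Hphit_lt1 (Hsat k Hk)) as [N HN].
  exists N; intros z Hz.
  apply (strictly_increasing_reflect_lt phit); auto.
  rewrite Hcomp; auto.
Qed.

Lemma superlinear_exists_large_value (h : R -> R) (z0 z1 : R) :
  (forall k, 0 < k -> exists N, forall z, N < z -> k * z < h z) ->
  exists c, z1 < c /\ z0 < h c.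
Proof.
  intros Hsuper. destruct (Hsuper 1 Rlt_0_1) as [N HN].
  exists (Rmax (Rmax N z1) z0 + 1).
  pose proof (Rmax_l (Rmax N z1) z0). pose proof (Rmax_r (Rmax N z1) z0).
  pose proof (Rmax_l N z1). pose proof (Rmax_r N z1).
  specialize (HN (Rmax (Rmax N z1) z0 + 1) ltac:(lra)). lra.
Qed.

Lemma Derive_ratio_ge_slope (phi phit h : R -> R) (z0 z1 c z : R) :
  (forall x, ex_derive phi x) -> (forall x, ex_derive phit x) ->
  strictly_increasing phit -> nonincreasing_on_ray (Derive phit) z0 ->
  (forall x, phit (h x) = phi x) -> strictly_increasing h ->
  convex_on_ray h z1 -> z1 < c -> z0 < h c -> c < z ->
  slope h c z <= Derive phi z / Derive phit (h z).
Proof.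
  intros Hphi_der Hphit_der Hphit_inc Hphit'_noninc Hcomp Hh_inc Hconv Hz1c Hz0c Hcz.
  assert (Hz0h : forall x, c <= x -> z0 < h x).
  { intros x Hx. destruct (Rle_lt_or_eq_dec c x Hx) as [Hlt | <-]; auto.
    pose proof (Hh_inc c x Hlt). lra. }
  set (D := Derive phit (h z)).
  assert (HD : 0 < D) by (apply (Derive_pos_on_ray phit z0); auto; apply Hz0h; lra).
  assert (Hincr : forall x, c < x < z -> D * slope h c z * (z - x) <= phi z - phi x).
  { intros x Hx.
    rewrite <- !Hcomp.
    assert (Hphit_incr : D * (h z - h x) <= phit (h z) - phit (h x)).
    { apply (increment_ge_Derive_right phit z0); auto; [apply Hz0h; lra |].
      apply Hh_inc; lra. }
    pose proof (slope_mul_le_increment h z1 c Hconv Hz1c x z Hx). nra. }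
  pose proof (Derive_ge_of_left_increments phi c z (D * slope h c z)
                (Hphi_der z) Hcz Hincr).
  apply (Rle_div_r (slope h c z) (Derive phi z) D); lra.
Qed.

Lemma inverse_tends_to_infinity (phi phiinv : R -> R) :
  (forall z, 0 < phi z < 1) -> strictly_increasing phi -> is_inv_on01 phi phiinv ->
  filterlim phiinv (at_left 1) (Rbar_locally p_infty).
Proof.
  intros Hrng Hinc Hinv P [K HK].
  pose proof (Hrng K) as HK01.
  exists (mkposreal (1 - phi K) ltac:(lra)); intros y Hy Hy1.
  unfold ball in Hy; simpl in Hy; unfold AbsRing_ball, abs, minus, plus, opp in Hy;
    simpl in Hy.
  apply Rabs_def2 in Hy.
  apply HK, (strictly_increasing_reflect_lt phi); auto.
  rewrite Hinv; lra.
Qed.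

Lemma at_left_1_unit_interval : at_left 1 (fun f => 0 < f < 1).
Proof.
  exists (mkposreal 1 Rlt_0_1); intros y Hy Hy1.
  unfold ball in Hy; simpl in Hy; unfold AbsRing_ball, abs, minus, plus, opp in Hy;
    simpl in Hy.
  apply Rabs_def2 in Hy. lra.
Qed.

Theorem theorem1
  (phi phit phiinv phitinv : R -> R) (z0 z1 : R)
  (* phi, phit : R -> (0,1), differentiable, strictly increasing, surjective *)
  (Hphi_rng : forall z, 0 < phi z < 1)
  (Hphit_rng : forall z, 0 < phit z < 1)
  (Hphi_der : forall z, ex_derive phi z)
  (Hphit_der : forall z, ex_derive phit z)
  (Hphi_inc : forall x y, x < y -> phi x < phi y)
  (Hphit_inc : forall x y, x < y -> phit x < phit y)
  (Hphi_inv : is_inv_on01 phi phiinv)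
  (Hphit_inv : is_inv_on01 phit phitinv)
  (* derivatives monotone on (z0, +oo), z0 >= 0 *)
  (Hz0 : 0 <= z0)
  (Hphi_mono : monotone_on_ray (Derive phi) z0)
  (Hphit_mono : monotone_on_ray (Derive phit) z0)
  (* (i) *)
  (Hsat : forall a, 0 < a ->
     is_lim (fun z => (1 - phi z) / (1 - phit (a * z))) p_infty 0)
  (* (ii) *)
  (Hconv : convex_on_ray (fun z => phitinv (phi z)) z1) :
  filterlim (fun f => gate_g phi phiinv f / gate_g phit phitinv f)
    (at_left 1) (Rbar_locally p_infty).
Proof.
  set (h := fun z => phitinv (phi z)) in Hconv.
  assert (Hcomp : forall z, phit (h z) = phi z) by (intro z; apply Hphit_inv, Hphi_rng).
  assert (Hphit'_noninc : nonincreasing_on_ray (Derive phit) z0).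
  { apply (Derive_nonincreasing_of_bounded phit z0 Hphit_der Hphit_inc 0 1); auto.
    intro x; pose proof (Hphit_rng x); lra. }
  assert (Hsuper := superlinear_of_saturation phi phit h
                      ltac:(apply Hphit_rng) Hphit_inc Hcomp Hsat).
  destruct (superlinear_exists_large_value h z0 z1 Hsuper) as [c [Hz1c Hhc]].
  assert (Hratio : filterlim (fun z => Derive phi z / Derive phit (h z))
                     (Rbar_locally p_infty) (Rbar_locally p_infty)).
  { apply (filterlim_ge_p_infty (slope h c)).
    - exists c; intros z Hz.
      apply (Derive_ratio_ge_slope phi phit h z0 z1); auto.
      apply (strictly_increasing_of_comp phit h phi); auto.
    - apply (slope_tends_to_infinity h z1); auto. }
  eapply filterlim_ext_loc;
    [| exact (filterlim_comp _ _ _ _ _ _ _ _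
                (inverse_tends_to_infinity phi phiinv Hphi_rng Hphi_inc Hphi_inv) Hratio)].
  apply (filter_imp (fun f => 0 < f < 1)); [intros f Hf | exact at_left_1_unit_interval].
  unfold gate_g, h. rewrite Hphi_inv by exact Hf. reflexivity.
Qed.
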